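(* Let $n\geq 2$ and let $L_n$ be the graph of linear $[n]$-phenylene (defined in the context). Then the base polynomial counting distances between pairs of degree-3 vertices of $L_n$ is \begin{eqnarray*} H^{3,3}_{b}(L_{n}) &=& 4(n-1)x+6\sum_{k=2}^{n-1}(n-k)x^{3k-2}+2\sum_{k=1}^{n-1}(2n-2k-1)x^{3k-1}\\&&+6\sum_{k=1}^{n-2}(n-k-1)x^{3k}. \end{eqnarray*}
   Context: All graphs are finite, simple and connected; $d(u,v)$ denotes the shortest-path distance and $d_u$ the degree of a vertex $u$. For a graph $G$ and a degree $p$, the base polynomial is $H^{p,p}_{b}(G)=\sum x^{d(u,v)}$, where the sum runs over all unordered pairs $\{u,v\}$ of distinct vertices of $G$ both of degree $p$. Linear $[n]$-phenylene $L_n$: take $n$ hexagons $H_1,\dots,H_n$; hexagon $H_i$ is the 6-cycle $a_i b_i c_i d_i e_i f_i a_i$. For each $i=1,\dots,n-1$ add the two edges $b_i f_{i+1}$ and $c_i e_{i+1}$, so that $b_i c_i e_{i+1} f_{i+1}$ is a 4-cycle joining consecutive hexagons. Thus $L_n$ has $6n$ vertices, $2n+4$ of degree 2 and $4n-4$ of degree 3. *)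

From HB Require Import structures.
From mathcomp Require Import all_boot all_order all_algebra.
Set Implicit Arguments. Unset Strict Implicit. Unset Printing Implicit Defensive.
Import GRing.Theory.
Local Open Scope ring_scope.

Section GraphDefs.
Variables (T : finType) (e : rel T).

Definition deg (u : T) : nat := #|[set y | e u y]|.

Definition ball (u : T) (k : nat) : {set T} :=
  iter k (fun S : {set T} => S :|: [set y | [exists x in S, e x y]]) [set u].

(* shortest-path distance: least k with v within k steps of u
   (all distances in a connected graph are < #|T|) *)
Definition dist (u v : T) : nat :=
  find (fun k => v \in ball u k) (iota 0 #|T|).

(* H^{p,p}_b(G): sum over unordered pairs {u,v}, u <> v, of degree p each,
   of x^{d(u,v)}; unordered pairs are enumerated once via enum_rank u < enum_rank v *)
Definition Hb (p : nat) : {poly int} :=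
  \sum_(u : T) \sum_(v : T | [&& (enum_rank u < enum_rank v)%N,
                               deg u == p & deg v == p]) 'X^(dist u v).
End GraphDefs.

(* Linear [n]-phenylene: vertex (i, a) is the a-th vertex of hexagon H_i,
   with a = 0,1,2,3,4,5 standing for a_i,b_i,c_i,d_i,e_i,f_i. *)
Definition phen_vertex (n : nat) := ('I_n * 'I_6)%type.

Definition phen_adj (n : nat) : rel (phen_vertex n) :=
  fun x y =>
    let i := nat_of_ord x.1 in let a := nat_of_ord x.2 in
    let j := nat_of_ord y.1 in let b := nat_of_ord y.2 in
    [|| (i == j) && (((a.+1 %% 6) == b)%N || ((b.+1 %% 6) == a)%N),
        (j == i.+1) && (((a == 1) && (b == 5)) || ((a == 2) && (b == 4)))%N
      | (i == j.+1) && (((b == 1) && (a == 5)) || ((b == 2) && (a == 4)))%N].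

(** Drawn with its hexagons in a row, [L_n] is a ladder with two rails of [3n]
    vertices: [f_i a_i b_i] and [e_i d_i c_i] fill columns [3i, 3i+1, 3i+2], the rungs
    are the edges [f_i e_i] and [b_i c_i], so every column not congruent to 1
    mod 3 carries a rung.  The distance between two ladder vertices is their
    column difference, plus one for changing rails, plus a detour of two when
    both lie in the same rungless column.  This is the graph distance because it
    vanishes only at the source, grows by at most one along an edge, and every
    other vertex has a neighbour one step closer.
    The degree-3 vertices are the [4(n-1)] vertices of the [n-1] squares
    [b_i c_i e_(i+1) f_(i+1)].  Two vertices of squares [k < l] are at distance
    [3(l-k) - 1 + w], where the 16 values of [w] have generating polynomial
    [2(1+x)^3], and the six pairs inside one square contribute [4x + 2x^2].
    Summing over pairs of squares,
    [H = (n-1)(4x + 2x^2) + sum_(1 <= d < n-1) (n-1-d) x^(3d-1) 2(1+x)^3],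
    which expands to the stated formula. *)

From HB Require Import structures.
From mathcomp Require Import all_boot all_order all_algebra.
From mathcomp Require Import zify ring.
Import GRing.Theory.

Set Implicit Arguments.
Unset Strict Implicit.
Unset Printing Implicit Defensive.

Section Potential.
Variables (T : finType) (e : rel T) (u : T) (f : T -> nat).
Hypothesis f_eq0 : forall y, (f y == 0) = (y == u).
Hypothesis f_adj : forall x y, e x y -> f y <= (f x).+1.
Hypothesis f_pred : forall y, y != u -> exists2 z, e z y & (f z).+1 = f y.

Lemma ball_potential k : ball e u k = [set y | f y <= k].
Proof.
elim: k => [|k IHk]; apply/setP=> y; rewrite inE.
  by rewrite /ball /= inE leqn0 f_eq0.
rewrite /ball iterS -/(ball e u k) IHk !inE; apply/idP/idP.
- case/orP=> [/leqW // | /existsP[x /andP[]]].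
  by rewrite inE => fx /f_adj fy; apply: leq_trans fy _.
- rewrite leq_eqVlt ltnS orbC => /orP[-> // | /eqP fy].
  have /f_pred[z ezy fz] : y != u by rewrite -f_eq0 fy.
  apply/orP; right; apply/existsP; exists z.
  by rewrite inE ezy andbT -ltnS fz fy.
Qed.

Lemma dist_potential v : f v < #|T| -> dist e u v = f v.
Proof.
move=> fv_lt; rewrite /dist -(subnKC (ltnW fv_lt)) iotaD find_cat size_iota add0n.
rewrite ifN; last first.
  by apply/hasPn => k; rewrite mem_iota ball_potential inE -ltnNge => /andP[].
move: fv_lt; rewrite -subn_gt0.
by case: (#|T| - f v) => // r _ /=; rewrite ball_potential inE leqnn addn0.
Qed.
End Potential.

(** The ladder: vertex [(x, side)] lies in column [x] of rail [side]. *)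
Definition rung (x : nat) : bool := x %% 3 != 1.

Definition ladder_adj (c d : nat * bool) : bool :=
  (c.2 == d.2) && (`|c.1 - d.1| == 1) || [&& c.2 != d.2, c.1 == d.1 & rung c.1].

Definition ladder_dist (c d : nat * bool) : nat :=
  `|c.1 - d.1| + (c.2 != d.2) + 2 * [&& c.2 != d.2, c.1 == d.1 & ~~ rung c.1].

Lemma ladder_dist_eq0 c d : (ladder_dist c d == 0) = (d == c).
Proof. by case: c d => [x r] [y s]; rewrite /ladder_dist xpair_eqE /=; case: r; case: s; lia. Qed.

Lemma ladder_distC c d : ladder_dist c d = ladder_dist d c.
Proof. by case: c d => [x r] [y s]; rewrite /ladder_dist /rung /=; case: r; case: s; lia. Qed.

Lemma ladder_dist_adj c y z : ladder_adj y z -> ladder_dist c z <= (ladder_dist c y).+1.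
Proof.
case: c y z => [x r] [y s] [z t]; rewrite /ladder_adj /ladder_dist /rung /=.
by case: r; case: s; case: t; lia.
Qed.

Lemma ladder_dist_pred m c y : c.1 < 3 * m -> y.1 < 3 * m -> y != c ->
  exists z, [&& z.1 < 3 * m, ladder_adj z y & (ladder_dist c z).+1 == ladder_dist c y].
Proof.
case: c y => [x r] [y s]; rewrite xpair_eqE /= => xm ym yc.
exists (if (s != r) && rung y then (y, r) else (if x < y then y.-1 else y.+1, s)).
rewrite /ladder_adj /ladder_dist /rung.
by case: r s yc => -[] //= yc; case: ifP => rung_y; have [xy|xy|xy] := ltngtP x y; rewrite /=; lia.
Qed.

Definition ladder_nbrs (N : nat) (c : nat * bool) : seq (nat * bool) :=
  [seq d <- [:: (c.1.-1, c.2); (c.1.+1, c.2); (c.1, ~~ c.2)] | ladder_adj c d && (d.1 < N)].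

Definition ladder_deg3 (N : nat) (c : nat * bool) : bool :=
  [&& rung c.1, 0 < c.1 & c.1.+1 < N].

Lemma ladder_nbrs_uniq N c : uniq (ladder_nbrs N c).
Proof. by apply: filter_uniq; case: c => x [] /=; rewrite !inE !xpair_eqE /=; lia. Qed.

Lemma mem_ladder_nbrs N c d : (d \in ladder_nbrs N c) = ladder_adj c d && (d.1 < N).
Proof.
rewrite mem_filter andb_idr // => /andP[].
by case: c d => [x r] [y s]; rewrite /ladder_adj !inE !xpair_eqE /=; case: r; case: s; lia.
Qed.

Lemma size_ladder_nbrs N c : c.1 < N -> (size (ladder_nbrs N c) == 3) = ladder_deg3 N c.
Proof.
by case: c => x r; rewrite size_filter /ladder_deg3 /ladder_adj /rung /=; case: r; lia.
Qed.

Definition sq_ladder (k s : nat) : nat * bool := (3 * k + 2 + (2 <= s), odd s).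

Lemma ladder_deg3_sq m k s : k < m -> ladder_deg3 (3 * m.+1) (sq_ladder k s).
Proof. by rewrite /ladder_deg3 /rung /=; case: (2 <= s); lia. Qed.

Lemma ladder_deg3P m c : ladder_deg3 (3 * m.+1) c ->
  exists2 k, k < m & exists2 s, s < 4 & c = sq_ladder k s.
Proof.
case: c => x r; rewrite /ladder_deg3 /rung /= => /and3P[rung_x x_gt0 x_lt].
exists ((x - 2) %/ 3); first by lia.
exists (2 * ((x - 2) %% 3) + r); first by case: r; lia.
rewrite /sq_ladder oddD oddM /=; congr pair; last by case: r.
by case: r; lia.
Qed.

Lemma sq_ladder_inj k l s t : s < 4 -> t < 4 -> sq_ladder k s = sq_ladder l t -> k = l /\ s = t.
Proof.
case: s => [|[|[|[|]]]] // _; case: t => [|[|[|[|]]]] // _ [] /=; lia.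
Qed.

Lemma sq_dist_lt k l s t : k < l ->
  ladder_dist (sq_ladder k s) (sq_ladder l t) =
    (3 * (l - k)).-1 + (s < 2) + (2 <= t) + (odd s != odd t).
Proof.
rewrite /ladder_dist /rung /= (ltnNge s).
by case: (odd s); case: (odd t); case: (2 <= s); case: (2 <= t); lia.
Qed.

Lemma sq_dist_eq k s t :
  ladder_dist (sq_ladder k s) (sq_ladder k t) = ((2 <= s) != (2 <= t)) + (odd s != odd t).
Proof.
rewrite /ladder_dist /rung /=.
by case: (odd s); case: (odd t); case: (2 <= s); case: (2 <= t); lia.
Qed.

(** Vertex [a] of a hexagon ([0..5] for [a..f]) sits in column [hex_col a] of
    the hexagon's three columns, on rail [hex_side a]; [hex_at] is the inverse. *)
Definition hex_col (a : nat) : nat :=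
  match a with 0 => 1 | 1 | 2 => 2 | 3 => 1 | _ => 0 end.

Definition hex_side (a : nat) : bool := 2 <= a <= 4.

Definition hex_at (col : nat) (side : bool) : nat :=
  match col, side with
  | 0, false => 5 | 0, true => 4 | 1, false => 0 | 1, true => 3 | 2, false => 1 | _, _ => 2
  end.

Section Phenylene.
Variable n : nat.
Local Notation V := (phen_vertex n.+1).
Local Notation N := (3 * n.+1).

Definition ladder_of (p : V) : nat * bool := (3 * p.1 + hex_col p.2, hex_side p.2).

Definition phen_of (c : nat * bool) : V :=
  (inord (c.1 %/ 3), inord (hex_at (c.1 %% 3) c.2)).

Lemma ladder_of_lt p : (ladder_of p).1 < N.
Proof.
case: p => [[i lt_i] [a lt_a]]; rewrite /ladder_of /=.
have : hex_col a < 3 by case: a lt_a => [|[|[|[|[|[|]]]]]].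
lia.
Qed.

Lemma ladder_ofK : cancel ladder_of phen_of.
Proof.
case=> [[i lt_i] [a lt_a]]; rewrite /phen_of /=.
have col_lt : hex_col a < 3 by case: a lt_a => [|[|[|[|[|[|]]]]]].
have -> : (3 * i + hex_col a) %/ 3 = i by lia.
have -> : (3 * i + hex_col a) %% 3 = hex_col a by lia.
by congr pair; apply/val_inj; rewrite /= inordK //; case: a lt_a {col_lt} => [|[|[|[|[|[|]]]]]].
Qed.

Lemma ladder_of_inj : injective ladder_of.
Proof. exact: can_inj ladder_ofK. Qed.

Lemma phen_ofK c : c.1 < N -> ladder_of (phen_of c) = c.
Proof.
case: c => x r /= x_lt; rewrite /ladder_of /phen_of /=.
have col_lt : x %% 3 < 3 by lia.
have at_lt : hex_at (x %% 3) r < 6 by case: (x %% 3) col_lt => [|[|[|]]] //; case: r.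
rewrite !inordK // {at_lt}; last by lia.
by case E: (x %% 3) col_lt => [|[|[|]]] // _; case: r => /=; congr pair; lia.
Qed.

Lemma phen_adjE p q : phen_adj p q = ladder_adj (ladder_of p) (ladder_of q).
Proof.
case: p q => [[i lt_i] [a lt_a]] [[j lt_j] [b lt_b]].
rewrite /phen_adj /ladder_adj /ladder_of /rung /=.
by case: a lt_a => [|[|[|[|[|[|]]]]]] // _; case: b lt_b => [|[|[|[|[|[|]]]]]] // _ /=;
  apply/idP/idP; lia.
Qed.

Lemma phen_distE u v : dist (@phen_adj n.+1) u v = ladder_dist (ladder_of u) (ladder_of v).
Proof.
apply: (dist_potential (f := fun y => ladder_dist (ladder_of u) (ladder_of y))).
- by move=> y; rewrite ladder_dist_eq0 (inj_eq ladder_of_inj).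
- by move=> x y; rewrite phen_adjE; apply: ladder_dist_adj.
- move=> y yu; have : ladder_of y != ladder_of u by rewrite (inj_eq ladder_of_inj).
  case/(ladder_dist_pred (ladder_of_lt u) (ladder_of_lt y)) => z /and3P[z_lt zy /eqP dz].
  by exists (phen_of z); rewrite ?phen_adjE phen_ofK.
- rewrite card_prod !card_ord; have := ladder_of_lt u; have := ladder_of_lt v.
  by rewrite /ladder_dist; case: (ladder_of u) => x []; case: (ladder_of v) => y [] /=; lia.
Qed.

Lemma phen_degE u : deg (@phen_adj n.+1) u = size (ladder_nbrs N (ladder_of u)).
Proof.
have nbrs_lt d : d \in ladder_nbrs N (ladder_of u) -> d.1 < N.
  by rewrite mem_ladder_nbrs => /andP[].
have inj : {in ladder_nbrs N (ladder_of u) &, injective phen_of}.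
  by move=> d d' /nbrs_lt d_lt /nbrs_lt d'_lt /(congr1 ladder_of); rewrite !phen_ofK.
rewrite /deg -(size_map phen_of) -(card_uniqP _); last first.
  by rewrite (map_inj_in_uniq inj) ladder_nbrs_uniq.
apply: eq_card => y; rewrite inE phen_adjE; apply/idP/mapP.
  move=> adj; exists (ladder_of y); last by rewrite ladder_ofK.
  by rewrite mem_ladder_nbrs adj ladder_of_lt.
by case=> d /[dup] /nbrs_lt d_lt; rewrite mem_ladder_nbrs => /andP[adj _] ->; rewrite phen_ofK.
Qed.

Definition sq_vertex (p : 'I_n * 'I_4) : V := phen_of (sq_ladder p.1 p.2).

Lemma ladder_of_sq p : ladder_of (sq_vertex p) = sq_ladder p.1 p.2.
Proof. by rewrite phen_ofK //= /sq_ladder; case: p => [[k lt_k] s] /=; case: (2 <= s); lia. Qed.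

Lemma sq_vertex_inj : injective sq_vertex.
Proof.
move=> [k s] [l t] /(congr1 ladder_of); rewrite !ladder_of_sq /=.
by case/sq_ladder_inj => // /val_inj -> /val_inj ->.
Qed.

Lemma phen_deg3E u : (deg (@phen_adj n.+1) u == 3) = (u \in sq_vertex @: setT).
Proof.
rewrite phen_degE size_ladder_nbrs ?ladder_of_lt //; apply/idP/imsetP.
  case/ladder_deg3P=> k lt_k [s lt_s] sq_u.
  exists (Ordinal lt_k, Ordinal lt_s) => //.
  by apply: ladder_of_inj; rewrite ladder_of_sq.
by case=> -[k s] _ ->; rewrite ladder_of_sq ladder_deg3_sq.
Qed.
End Phenylene.

Local Open Scope ring_scope.

Lemma sum_rank_pairs (T : finType) (R : nmodType) (P : pred T) (F : T -> T -> R) :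
  (forall u v, F u v = F v u) ->
  (\sum_u \sum_(v | [&& (enum_rank u < enum_rank v)%N, P u & P v]) F u v) *+ 2 =
  \sum_(u | P u) \sum_(v | P v && (v != u)) F u v.
Proof.
move=> FC; pose lt (u v : T) := (enum_rank u < enum_rank v)%N.
have neq_lt (u v : T) : (v != u) = lt u v || lt v u.
  by rewrite -(inj_eq enum_rank_inj) -val_eqE neq_ltn orbC.
have restrict (Q : rel T) : \sum_u \sum_(v | [&& Q u v, P u & P v]) F u v =
    \sum_(u | P u) \sum_(v | P v && Q u v) F u v.
  rewrite [RHS]big_mkcond; apply: eq_bigr => u _; case: (P u) => /=.
    by apply: eq_bigl => v; rewrite andbC.
  by rewrite big_pred0 // => v; rewrite andbF.
under [RHS]eq_bigr => u _ do rewrite (bigID (lt u)) /=.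
rewrite big_split /= mulr2n restrict; congr (_ + _).
  apply: eq_bigr => u _; apply: eq_bigl => v.
  by rewrite neq_lt -/(lt u v); case: (lt u v); rewrite ?andbT ?andbF.
rewrite [RHS](exchange_big_dep P) /=; last by move=> u v _ /andP[] /andP[].
apply: eq_bigr => v Pv; apply: eq_big => [u|u _]; last exact: FC.
by rewrite Pv neq_lt /lt; case: ltngtP; rewrite ?andbT ?andbF.
Qed.

Lemma sum_toeplitz (R : nmodType) (G : nat -> R) m :
  \sum_(0 <= k < m) \sum_(0 <= l < m) G `|k - l|%N =
  G 0%N *+ m + (\sum_(1 <= d < m) G d *+ (m - d)) *+ 2.
Proof.
elim: m => [|m IHm]; first by rewrite !big_geq // mulr0n mul0rn addr0.
have edge : \sum_(0 <= k < m) G `|k - m|%N = \sum_(1 <= d < m.+1) G d.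
  rewrite big_nat_rev /= big_add1 /=; apply: eq_big_nat => k /andP[_ km].
  by congr G; lia.
have weights : \sum_(1 <= d < m.+1) G d *+ (m.+1 - d) =
    \sum_(1 <= d < m) G d *+ (m - d) + \sum_(1 <= d < m.+1) G d.
  have -> : \sum_(1 <= d < m) G d *+ (m - d) = \sum_(1 <= d < m.+1) G d *+ (m - d).
    case: m {IHm edge} => [|m]; first by rewrite !big_geq.
    by rewrite [RHS]big_nat_recr //= subnn mulr0n addr0.
  rewrite -big_split /=; apply: eq_big_nat => d /andP[_ dm].
  by rewrite subSn ?mulrSr // -ltnS.
rewrite big_nat_recr //=.
under eq_bigr => k _ do rewrite big_nat_recr //=.
rewrite big_split /= IHm edge.
under eq_bigr => k _ do rewrite distnC.
rewrite (big_nat_recr m 0) //= edge distnn weights mulrnDl (mulrSr (G 0%N)) !mulr2n.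
by rewrite -!addrA; congr (_ + _); rewrite [RHS]addrC -!addrA.
Qed.

Lemma poly_pmulrnI (R : numDomainType) n : (0 < n)%N -> injective (fun p : {poly R} => p *+ n).
Proof.
move=> n_gt0 p q /= /polyP pq; apply/polyP => i.
by apply: (Num.Theory.pmulrnI n_gt0); rewrite -!coefMn pq.
Qed.

Definition cross_square_poly : {poly int} := 2%:R * (1 + 'X) ^+ 3.

Definition inner_square_poly : {poly int} := 4%:R * 'X + 2%:R * 'X^2.

Definition square_block (k l : nat) : {poly int} :=
  \sum_(s < 4) \sum_(t < 4)
    (if (l, t) != (k, s) then 'X^(ladder_dist (sq_ladder k s) (sq_ladder l t)) else 0).

Lemma square_block_lt k l : (k < l)%N ->
  square_block k l = 'X^((3 * (l - k)).-1) * cross_square_poly.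
Proof.
move=> lt_kl; rewrite /square_block.
under eq_bigr => s _ do under eq_bigr => t _ do
  rewrite xpair_eqE (gtn_eqF lt_kl) /= sq_dist_lt // !exprD.
by rewrite !big_ord_recr !big_ord0 /= /cross_square_poly; ring.
Qed.

Lemma square_block_diag k : square_block k k = inner_square_poly *+ 2.
Proof.
rewrite /square_block.
under eq_bigr => s _ do under eq_bigr => t _ do rewrite xpair_eqE eqxx sq_dist_eq !exprD.
by rewrite !big_ord_recr !big_ord0 /= /inner_square_poly; ring.
Qed.

Lemma square_blockC k l : square_block k l = square_block l k.
Proof.
rewrite /square_block exchange_big; apply: eq_bigr => s _; apply: eq_bigr => t _.
by rewrite eq_sym ladder_distC.
Qed.

Definition square_gap_poly (d : nat) : {poly int} :=
  if d is 0 then inner_square_poly *+ 2 else 'X^((3 * d).-1) * cross_square_poly.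

Lemma square_blockE k l : square_block k l = square_gap_poly `|k - l|%N.
Proof.
wlog le_kl : k l / (k <= l)%N.
  by move=> IH; case: (leqP k l) => [/IH //|/ltnW/IH]; rewrite square_blockC distnC.
case: (ltngtP k l) le_kl => // [lt_kl _ | -> _]; last by rewrite distnn square_block_diag.
have [d gap] : exists d, `|k - l|%N = d.+1 by exists (l - k).-1; lia.
by rewrite square_block_lt // gap; have -> : (l - k)%N = d.+1 by lia.
Qed.

Section PhenyleneCount.
Variable n : nat.

Lemma Hb3_phen_double :
  Hb (@phen_adj n.+1) 3 *+ 2 = \sum_(0 <= k < n) \sum_(0 <= l < n) square_block k l.
Proof.
rewrite /Hb.
under eq_bigr => u _ do under eq_bigl => v do rewrite !phen_deg3E.
rewrite sum_rank_pairs; last by move=> u v; rewrite !phen_distE ladder_distC.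
under eq_bigr => u _ do rewrite big_mkcondr (big_imset _ (in2W (@sq_vertex_inj n))) /=.
rewrite (big_imset _ (in2W (@sq_vertex_inj n))) /=.
under eq_bigr => p _ do under eq_bigr => q _ do
  rewrite (inj_eq (@sq_vertex_inj n)) phen_distE !ladder_of_sq.
rewrite (eq_bigl _ _ (fun p => in_setT p)).
under eq_bigr => p _ do rewrite (eq_bigl _ _ (fun q => in_setT q)).
rewrite big_mkord; under [RHS]eq_bigr => k _ do rewrite big_mkord /square_block exchange_big /=.
rewrite [RHS]pair_big; apply: eq_bigr => -[k s] _; rewrite [RHS]pair_big.
by apply: eq_bigr => -[l t] _.
Qed.

Lemma Hb3_phen : Hb (@phen_adj n.+1) 3 =
  inner_square_poly *+ n + \sum_(1 <= d < n) ('X^((3 * d).-1) * cross_square_poly) *+ (n - d).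
Proof.
apply: (@poly_pmulrnI _ 2) => //=; rewrite Hb3_phen_double.
rewrite (eq_bigr (fun k : nat => \sum_(0 <= l < n) square_gap_poly `|k - l|%N)); last first.
  by move=> k _; apply: eq_bigr => l _; apply: square_blockE.
rewrite sum_toeplitz [RHS]mulrnDl; congr (_ + _ *+ 2); first exact: mulrnAC.
by apply: eq_big_nat => -[].
Qed.
End PhenyleneCount.

Lemma square_sum_closed_form m :
  inner_square_poly *+ m + \sum_(1 <= d < m) ('X^((3 * d).-1) * cross_square_poly) *+ (m - d) =
    (4 * (m.+1 - 1))%N%:R * 'X
    + \sum_(2 <= k < m.+1) (6 * (m.+1 - k))%N%:R * 'X^(3 * k - 2)
    + \sum_(1 <= k < m.+1) (2 * (2 * m.+1 - 2 * k - 1))%N%:R * 'X^(3 * k - 1)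
    + \sum_(1 <= k < m.+1 - 1) (6 * (m.+1 - k - 1))%N%:R * 'X^(3 * k).
Proof.
have [-> | m_gt0] := posnP m; first by rewrite !big_geq //= mulr0n mul0r !addr0.
have -> : \sum_(2 <= k < m.+1) (6 * (m.+1 - k))%N%:R * 'X^(3 * k - 2) =
    \sum_(1 <= d < m) (6 * (m - d))%N%:R * 'X^(3 * d + 1) :> {poly int}.
  by rewrite big_add1 /=; apply: eq_big_nat => d _; congr (_%:R * 'X^_); lia.
have -> : \sum_(1 <= k < m.+1 - 1) (6 * (m.+1 - k - 1))%N%:R * 'X^(3 * k) =
    \sum_(1 <= d < m) (6 * (m - d))%N%:R * 'X^(3 * d) :> {poly int}.
  by rewrite subn1; apply: eq_big_nat => d _; congr (_%:R * _); lia.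
have -> : \sum_(1 <= k < m.+1) (2 * (2 * m.+1 - 2 * k - 1))%N%:R * 'X^(3 * k - 1) =
    (2 * m)%N%:R * 'X^2 + \sum_(1 <= d < m) (2 * (m - d))%N%:R * 'X^(3 * d - 1)
    + \sum_(1 <= d < m) (2 * (m - d))%N%:R * 'X^(3 * d + 2) :> {poly int}.
  transitivity (\sum_(1 <= k < m.+1) ((2 * (m - k))%N%:R * 'X^(3 * k - 1)
      + (2 * (m.+1 - k))%N%:R * 'X^(3 * k - 1)) : {poly int}).
    by apply: eq_big_nat => k /andP[k_gt0 k_le]; rewrite -mulrDl -natrD; congr (_%:R * _); lia.
  rewrite big_split /= big_nat_recr //= subnn muln0 mul0r addr0 [X in _ + X = _]big_ltn //=.
  rewrite addrCA -[RHS]addrA; congr (_ + (_ + _)); first by rewrite subn1.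
  by rewrite big_add1 /=; apply: eq_big_nat => d _; congr (_%:R * 'X^_); lia.
have -> : \sum_(1 <= d < m) ('X^((3 * d).-1) * cross_square_poly) *+ (m - d) =
    \sum_(1 <= d < m) ((2 * (m - d))%N%:R * 'X^(3 * d - 1) + (6 * (m - d))%N%:R * 'X^(3 * d)
      + (6 * (m - d))%N%:R * 'X^(3 * d + 1) + (2 * (m - d))%N%:R * 'X^(3 * d + 2)).
  apply: eq_big_nat => d /andP[d_gt0 _].
  have [e e3d] : exists e, (3 * d)%N = e.+1 by exists (3 * d).-1; lia.
  rewrite e3d subn1 addn1 addn2 /= !exprSr !natrM -mulr_natl /cross_square_poly; ring.
rewrite !big_split /= /inner_square_poly subn1 /= !natrM -mulr_natl; ring.
Qed.

Theorem theorem2p3 (n : nat) (hn : (2 <= n)%N) :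
  Hb (@phen_adj n) 3 =
    (4 * (n - 1))%N%:R * 'X
    + \sum_(2 <= k < n) (6 * (n - k))%N%:R * 'X^(3 * k - 2)
    + \sum_(1 <= k < n) (2 * (2 * n - 2 * k - 1))%N%:R * 'X^(3 * k - 1)
    + \sum_(1 <= k < n - 1) (6 * (n - k - 1))%N%:R * 'X^(3 * k).
Proof.
case: n hn => [|m] // _.
by rewrite Hb3_phen square_sum_closed_form.
Qed.
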